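(* Let $u\in\{\mathrm{fail},\mathrm{succ}\}$, and let $F\subseteq H_u$ and $G\subseteq N$ with $F\subseteq G$. Let $G_{|F|}$ be the set of the $|F|$ tests of $G$ with the smallest values of $\sigma_u^{-1}$ (i.e., appearing earliest in the order $\sigma_u$). Then $$\sum_{j\in G_{|F|}}c_j\le 2\sum_{j\in F}c_j.$$
   Context: Tests $N=\{1,\dots,n\}$ have costs $c_j\ge0$ and probabilities $p_j\in(0,1)$. $\sigma_{\mathrm{fail}},\sigma_{\mathrm{succ}}$ are permutations of $N$ (ties broken arbitrarily) with $c_{\sigma_{\mathrm{fail}}(1)}/(1-p_{\sigma_{\mathrm{fail}}(1)})\le\dots\le c_{\sigma_{\mathrm{fail}}(n)}/(1-p_{\sigma_{\mathrm{fail}}(n)})$ and $c_{\sigma_{\mathrm{succ}}(1)}/p_{\sigma_{\mathrm{succ}}(1)}\le\dots\le c_{\sigma_{\mathrm{succ}}(n)}/p_{\sigma_{\mathrm{succ}}(n)}$. $H_{\mathrm{fail}}=\{j\in N:p_j<\tfrac12\}$ and $H_{\mathrm{succ}}=\{j\in N:p_j\ge\tfrac12\}$. *)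

From mathcomp Require Import all_boot all_order all_algebra all_fingroup.
Set Implicit Arguments. Unset Strict Implicit. Unset Printing Implicit Defensive.
Import Order.TTheory GRing.Theory Num.Theory.
Local Open Scope ring_scope.

Inductive outcome := fail | succ.

Definition test_ratio (R : realFieldType) (n : nat) (u : outcome)
  (c p : 'I_n -> R) (j : 'I_n) : R :=
  match u with fail => c j / (1 - p j) | succ => c j / p j end.

Definition Hset (R : realFieldType) (n : nat) (u : outcome)
  (p : 'I_n -> R) : {set 'I_n} :=
  match u with
  | fail => [set j | p j < 2^-1]
  | succ => [set j | 2^-1 <= p j]
  end.

(* s : {perm 'I_n} lists the tests in order: s k is the test at position k,
   so (s^-1) j is the position of test j.  s is sorted by key f. *)
Definition sorted_by (R : realFieldType) (n : nat) (f : 'I_n -> R)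
  (s : {perm 'I_n}) : Prop :=
  forall i k : 'I_n, (i <= k)%N -> f (s i) <= f (s k).

Definition first_k (n : nat) (s : {perm 'I_n}) (G : {set 'I_n}) (k : nat)
  : {set 'I_n} :=
  [set j in G | #|[set i in G | (nat_of_ord ((s^-1)%g i) < (s^-1)%g j)%N]| < k]%N.

Definition sigma_u (n : nat) (u : outcome) (sf ss : {perm 'I_n}) :=
  match u with fail => sf | succ => ss end.

From mathcomp Require Import all_boot all_order all_algebra all_fingroup.
From mathcomp Require Import zify lra.
Set Implicit Arguments. Unset Strict Implicit. Unset Printing Implicit Defensive.
Import Order.TTheory GRing.Theory Num.Theory.
Local Open Scope ring_scope.

(* Let K = G_{|F|} be the |F| earliest tests of G in the order
   sigma_u, and let w be the sort key of sigma_u (c/(1-p) or c/p).  Always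
   c <= w, and on H_u also w <= 2c.  Since F is a subset of G of size |F|,
   K is a prefix of G of size at most |F|, so every test of K \ F precedes,
   hence has key at most that of, every test of F \ K, and
   |K \ F| <= |F \ K|.  An averaging argument then gives
     sum_{K\F} c <= sum_{K\F} w <= sum_{F\K} w <= 2 sum_{F\K} c,
   and adding sum_{K /\ F} c (counted once on the left, twice on the right)
   proves the claim. *)

Section FirstK.
Variables (n : nat) (s : {perm 'I_n}) (G : {set 'I_n}).

Let pos (j : 'I_n) : nat := (s^-1)%g j.

Let rank (j : 'I_n) : nat := #|[set i in G | (pos i < pos j)%N]|.

Lemma mem_first_k (k : nat) (j : 'I_n) :
  (j \in first_k s G k) = (j \in G) && (rank j < k)%N.
Proof. by rewrite inE. Qed.

Lemma rank_mono (x y : 'I_n) : (pos x <= pos y)%N -> (rank x <= rank y)%N.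
Proof.
move=> hxy; apply: subset_leq_card; apply/subsetP => i.
by rewrite !inE => /andP[-> hi] /=; exact: leq_trans hi hxy.
Qed.

Lemma rank_strict (x y : 'I_n) :
  x \in G -> (pos x < pos y)%N -> (rank x < rank y)%N.
Proof.
move=> xG hxy.
have xnot : x \notin [set i in G | (pos i < pos x)%N] by rewrite inE ltnn andbF.
have : (#|x |: [set i in G | (pos i < pos x)%N]| <= rank y)%N.
  apply: subset_leq_card; apply/subsetP => i; rewrite !inE.
  case/orP => [/eqP -> | /andP[-> hi]]; first by rewrite xG.
  exact: ltn_trans hi hxy.
by rewrite cardsU1 xnot.
Qed.

Lemma rank_inj : {in G &, injective rank}.
Proof.
move=> x y xG yG hxy; case: (ltngtP (pos x) (pos y)) => h.
- by have := rank_strict xG h; rewrite hxy ltnn.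
- by have := rank_strict yG h; rewrite hxy ltnn.
- by apply: (@perm_inj _ (s^-1)%g); exact: val_inj.
Qed.

(* G_k has at most k elements: their ranks are distinct and below k. *)
Lemma card_first_k (k : nat) : (#|first_k s G k| <= k)%N.
Proof.
rewrite cardE -(size_map rank) -[X in (_ <= X)%N](size_iota 0 k).
apply: uniq_leq_size.
  rewrite map_inj_in_uniq ?enum_uniq // => x y.
  rewrite !mem_enum !mem_first_k => /andP[xG _] /andP[yG _]; exact: rank_inj.
move=> m /mapP[j]; rewrite mem_enum mem_first_k => /andP[_ hj] ->.
by rewrite mem_iota.
Qed.

Lemma first_k_before (k : nat) (x y : 'I_n) :
  x \in first_k s G k -> y \in G -> y \notin first_k s G k -> (pos x < pos y)%N.
Proof.
rewrite !mem_first_k => /andP[_ hx] yG; rewrite yG /= -leqNgt => hy.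
rewrite ltnNge; apply/negP => /rank_mono; lia.
Qed.

End FirstK.

Lemma sorted_by_pos (R : realFieldType) (n : nat) (w : 'I_n -> R)
  (s : {perm 'I_n}) (x y : 'I_n) :
  sorted_by w s -> ((s^-1)%g x <= (s^-1)%g y)%N -> w x <= w y.
Proof. by move=> hs /hs; rewrite !permKV. Qed.

Lemma sum_exch (R : realFieldType) (T : finType) (w : T -> R) (A B : {set T}) :
  (forall x y, x \in A -> y \in B -> w x <= w y) -> (#|A| <= #|B|)%N ->
  (forall y, y \in B -> 0 <= w y) ->
  \sum_(x in A) w x <= \sum_(y in B) w y.
Proof.
move=> hle hcard hpos.
have sumB0 : 0 <= \sum_(y in B) w y by apply: sumr_ge0 => y /hpos.
(* |B| * sum_A w <= |A| * sum_B w <= |B| * sum_B w *)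
have pairs : (\sum_(x in A) w x) * #|B|%:R <= #|A|%:R * \sum_(y in B) w y.
  have -> : (\sum_(x in A) w x) * #|B|%:R = \sum_(x in A) \sum_(y in B) w x.
    by rewrite mulr_suml; apply: eq_bigr => x _; rewrite sumr_const mulr_natr.
  rewrite mulr_natl -sumr_const; apply: ler_sum => x xA; apply: ler_sum => y yB.
  exact: hle.
have sizes : #|A|%:R * \sum_(y in B) w y <= #|B|%:R * \sum_(y in B) w y.
  by apply: ler_wpM2r => //; rewrite ler_nat.
have [B0 | Bpos] := posnP #|B|.
  have /cards0_eq -> : #|A| = 0%N by move: hcard; rewrite B0; case: #|A|.
  by rewrite big_set0.
have BposR : 0 < #|B|%:R :> R by rewrite ltr0n.
rewrite -(ler_pM2r BposR) [X in _ <= X]mulrC.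
exact: le_trans pairs sizes.
Qed.

Lemma first_k_cost_le2 (R : realFieldType) (n : nat) (c w : 'I_n -> R)
  (s : {perm 'I_n}) (F G : {set 'I_n}) :
  sorted_by w s -> (forall j, 0 <= c j) -> (forall j, c j <= w j) ->
  (forall j, j \in F -> w j <= 2 * c j) -> F \subset G ->
  \sum_(j in first_k s G #|F|) c j <= 2 * \sum_(j in F) c j.
Proof.
move=> hs hc hcw hwc hFG; set K := first_k s G #|F|.
have exch : \sum_(x in K :\: F) w x <= \sum_(y in F :\: K) w y.
  apply: sum_exch.
  - move=> x y /setDP[xK _] /setDP[yF yK]; apply: (sorted_by_pos hs).
    by apply: ltnW; apply: first_k_before xK _ yK; exact: (subsetP hFG).
  - have := card_first_k s G #|F|; rewrite -/K !cardsD setIC.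
    have := subset_leq_card (subsetIl K F); have := subset_leq_card (subsetIr K F).
    lia.
  - by move=> y _; exact: le_trans (hc y) (hcw y).
have lowK : \sum_(x in K :\: F) c x <= \sum_(x in K :\: F) w x.
  exact: ler_sum.
have upF : \sum_(x in F :\: K) w x <= 2 * \sum_(x in F :\: K) c x.
  by rewrite mulr_sumr; apply: ler_sum => x /setDP[xF _]; exact: hwc.
have common : 0 <= \sum_(x in F :&: K) c x by apply: sumr_ge0.
rewrite (big_setID F) (big_setID K (A := F)) /= setIC; lra.
Qed.

Lemma test_ratio_ge (R : realFieldType) (n : nat) (u : outcome)
  (c p : 'I_n -> R) (j : 'I_n) :
  0 <= c j -> 0 < p j < 1 -> c j <= test_ratio u c p j.
Proof.
move=> hc /andP[hp0 hp1]; case: u => /=.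
- by rewrite ler_pdivlMr ?subr_gt0 //; nra.
- by rewrite ler_pdivlMr //; nra.
Qed.

Lemma test_ratio_le2 (R : realFieldType) (n : nat) (u : outcome)
  (c p : 'I_n -> R) (j : 'I_n) :
  0 <= c j -> 0 < p j < 1 -> j \in Hset u p -> test_ratio u c p j <= 2 * c j.
Proof.
move=> hc /andP[hp0 hp1]; case: u; rewrite /= inE => hpj.
- by rewrite ler_pdivrMr ?subr_gt0 //; nra.
- by rewrite ler_pdivrMr //; nra.
Qed.

Theorem lemma4 (R : realFieldType) (n : nat) (c p : 'I_n -> R)
  (sf ss : {perm 'I_n})
  (hc : forall j, 0 <= c j)
  (hp : forall j, 0 < p j < 1)
  (hsf : sorted_by (@test_ratio R n fail c p) sf)
  (hss : sorted_by (@test_ratio R n succ c p) ss)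
  (u : outcome) (F G : {set 'I_n})
  (hFH : F \subset @Hset R n u p) (hFG : F \subset G) :
  \sum_(j in first_k (sigma_u u sf ss) G #|F|) c j <= 2 * \sum_(j in F) c j.
Proof.
have sorted_u : sorted_by (test_ratio u c p) (sigma_u u sf ss) by case: u hFH.
apply: (first_k_cost_le2 sorted_u hc) => // j.
- exact: test_ratio_ge (hc j) (hp j).
- by move=> jF; apply: test_ratio_le2 (hc j) (hp j) (subsetP hFH j jF).
Qed.
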